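(* Let $\alpha$ be a reduced operation sequence. (a) Any operation of $\alpha$ whose corresponding operations do not occupy a set of consecutive positions of $\alpha$ is fixed. (b) Any operation of $\alpha$ that corresponds to a fixed operation of $\alpha$ is fixed.
   Context: Operation sequences: $\sigma[a]$ ($a\ge1$) denotes pushing the top $a$ elements of the input stack, as a block with relative order unchanged, onto the top of a working stack; $\tau[b]$ ($b\ge1$) denotes moving the top $b$ elements of the working stack, as a block with relative order unchanged, onto the top of an output stack; $\sigma=\sigma[1]$, $\tau=\tau[1]$. A well-formed operation sequence is a word $\alpha=\alpha_1\cdots\alpha_m$ in these symbols such that in every prefix the total push size is at least the total pop size, with equality for the whole word; its size $n$ is the total push size. Acting on an input stack containing $1,\dots,n$ with $1$ on top, it produces the permutation read from the final output stack top to bottom. Two well-formed sequences are equivalent if they have the same size and produce the same permutation. $\alpha$ is reduced if every consecutive pair $\alpha_i\alpha_{i+1}$ with $\alpha_i$ a push and $\alpha_{i+1}$ a pop equals $\sigma[1]\tau[1]$. The vertices of $\alpha$ are $v_0=(0,0)$ and $v_i=v_{i-1}+(a,a)$ if $\alpha_i=\sigma[a]$, $v_i=v_{i-1}+(b,-b)$ if $\alpha_i=\tau[b]$. The support of a push (resp. pop) is the set of elements it places on (resp. removes from) the working stack when $\alpha$ acts on input $1,\dots,n$. A push and a pop correspond if their supports intersect (the operations corresponding to a push are pops, and vice versa). An operation $\alpha_i$ of a reduced sequence $\alpha$ is fixed if for every reduced sequence $\beta=\beta_1\cdots\beta_{m'}$ equivalent to $\alpha$, with vertices $w_0,\dots,w_{m'}$,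 there is $j$ with $w_{j-1}=v_{i-1}$ and $w_j=v_i$. *)

From mathcomp Require Import all_boot.
From mathcomp Require Import ssralg ssrint.
Set Implicit Arguments. Unset Strict Implicit. Unset Printing Implicit Defensive.

(* An operation: Push a = sigma[a], Pop b = tau[b]. *)
Inductive op := Push of nat | Pop of nat.

Definition is_push (o : op) : bool := if o is Push _ then true else false.
Definition is_pop (o : op) : bool := if o is Pop _ then true else false.
Definition op_size (o : op) : nat := match o with Push a => a | Pop b => b end.

(* Stacks are sequences with the head being the top. A state is
   (input stack, working stack, output stack). *)
Record state := State { inp : seq nat; work : seq nat; out : seq nat }.

Definition step (s : state) (o : op) : state :=
  match o with
  | Push a => State (drop a (inp s)) (take a (inp s) ++ work s) (out s)
  | Pop b => State (inp s) (drop b (work s)) (take b (work s) ++ out s)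
  end.

Definition run (s : state) (ops : seq op) : state := foldl step s ops.

Definition init (n : nat) : state := State (iota 1 n) [::] [::].

Definition push_total (ops : seq op) : nat :=
  sumn [seq (if o is Push a then a else 0) | o <- ops].
Definition pop_total (ops : seq op) : nat :=
  sumn [seq (if o is Pop b then b else 0) | o <- ops].

Definition seq_size (ops : seq op) : nat := push_total ops.

Definition well_formed (ops : seq op) : Prop :=
  (forall i, i < size ops -> 0 < op_size (nth (Push 0) ops i)) /\
  (forall k, pop_total (take k ops) <= push_total (take k ops)) /\
  pop_total ops = push_total ops.

(* the produced permutation, read from the output stack top to bottom *)
Definition produced (ops : seq op) : seq nat :=
  out (run (init (seq_size ops)) ops).

Definition equivalent (a b : seq op) : Prop :=
  [/\ well_formed a, well_formed b, seq_size a = seq_size b &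
      produced a = produced b].

(* Positions are 0-based: operation i is nth (Push 0) ops i, i < size ops. *)
Definition reduced (ops : seq op) : Prop :=
  well_formed ops /\
  forall i a b, i.+1 < size ops ->
    nth (Push 0) ops i = Push a -> nth (Push 0) ops i.+1 = Pop b ->
    a = 1 /\ b = 1.

(* vertex i = v_i, the vertex reached after the first i operations *)
Definition vadd (v : nat * int) (o : op) : nat * int :=
  match o with
  | Push a => (v.1 + a, v.2 + (a%:Z))%R
  | Pop b => (v.1 + b, v.2 - (b%:Z))%R
  end.

Definition vertex (ops : seq op) (i : nat) : nat * int :=
  foldl vadd (0, 0%R) (take i ops).

Definition support (ops : seq op) (i : nat) : seq nat :=
  let s := run (init (seq_size ops)) (take i ops) in
  match nth (Push 0) ops i with
  | Push a => take a (inp s)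
  | Pop b => take b (work s)
  end.

Definition corresponds (ops : seq op) (i j : nat) : Prop :=
  [/\ i < size ops, j < size ops,
      (is_push (nth (Push 0) ops i) && is_pop (nth (Push 0) ops j)) ||
      (is_pop (nth (Push 0) ops i) && is_push (nth (Push 0) ops j)) &
      exists x, x \in support ops i /\ x \in support ops j].

Definition fixed (ops : seq op) (i : nat) : Prop :=
  forall beta, reduced beta -> equivalent ops beta ->
    exists j, j < size beta /\ vertex beta j = vertex ops i /\
              vertex beta j.+1 = vertex ops i.+1.

Definition consecutive (P : nat -> Prop) : Prop :=
  forall j k l, j <= k -> k <= l -> P j -> P l -> P k.

(* Every element x of 1..n is moved onto the working stack by one push, at
   position [push_time], and off it by one pop, at position [pop_time]; an
   operation is determined by the set of elements it moves, and its vertices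
   by how many elements were pushed and popped before it. In a reduced
   sequence every peak is [sigma tau], so the produced permutation alone
   decides whether w is popped before x is pushed: exactly when every y >= x
   is output before w. Comparing two equivalent reduced sequences, it follows
   that x and y switch between sharing a push and not exactly when they switch
   between sharing a pop and not.
   (a) If the pops corresponding to a push are not consecutive, some element z
   is popped strictly between two elements a, b of the push and pushed after a
   is popped; then every equivalent reduced sequence still pushes a together
   with exactly the same elements, so the push occupies the same edge. Dually
   for pops, with z pushed strictly between two elements a, b of the pop and
   popped before b is pushed.
   (b) A fixed operation moves the same elements in every equivalent reduced
   sequence, hence so does each corresponding operation, by the switching
   property. *)

From Pilot Require Import Defs.
From mathcomp Require Import all_boot.
From mathcomp Require Import ssralg ssrint.
From mathcomp Require Import zify.
From Stdlib Require Import Classical.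
Set Implicit Arguments. Unset Strict Implicit. Unset Printing Implicit Defensive.

Definition op_at (s : seq op) k := nth (Push 0) s k.
Definition pushed (s : seq op) k := push_total (take k s).
Definition popped (s : seq op) k := pop_total (take k s).
Definition state_at (s : seq op) k := run (init (seq_size s)) (take k s).
Definition push_size (o : op) := if o is Push a then a else 0.
Definition pop_size (o : op) := if o is Pop b then b else 0.

Lemma push_total_rcons t o : push_total (rcons t o) = push_total t + push_size o.
Proof. by rewrite /push_total map_rcons sumn_rcons. Qed.
Lemma pop_total_rcons t o : pop_total (rcons t o) = pop_total t + pop_size o.
Proof. by rewrite /pop_total map_rcons sumn_rcons. Qed.

Lemma pushedS s k : k < size s -> pushed s k.+1 = pushed s k + push_size (op_at s k).
Proof. by move=> h; rewrite /pushed (take_nth (Push 0) h) push_total_rcons. Qed.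
Lemma poppedS s k : k < size s -> popped s k.+1 = popped s k + pop_size (op_at s k).
Proof. by move=> h; rewrite /popped (take_nth (Push 0) h) pop_total_rcons. Qed.
Lemma state_atS s k : k < size s -> state_at s k.+1 = step (state_at s k) (op_at s k).
Proof. by move=> h; rewrite /state_at (take_nth (Push 0) h) /run foldl_rcons. Qed.

Lemma pushed_oversize s k : size s <= k -> pushed s k = seq_size s.
Proof. by move=> h; rewrite /pushed take_oversize. Qed.
Lemma popped_oversize s k : size s <= k -> popped s k = popped s (size s).
Proof. by move=> h; rewrite /popped !take_oversize. Qed.
Lemma state_at_oversize s k : size s <= k -> state_at s k = state_at s (size s).
Proof. by move=> h; rewrite /state_at !take_oversize. Qed.
Lemma pushed_stable s k : size s <= k -> pushed s k.+1 = pushed s k.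
Proof. by move=> h; rewrite /pushed !take_oversize // leqW. Qed.
Lemma popped_stable s k : size s <= k -> popped s k.+1 = popped s k.
Proof. by move=> h; rewrite /popped !take_oversize // leqW. Qed.
Lemma state_at_stable s k : size s <= k -> state_at s k.+1 = state_at s k.
Proof. by move=> h; rewrite /state_at !take_oversize // leqW. Qed.

Lemma pushed0 s : pushed s 0 = 0. Proof. by rewrite /pushed take0. Qed.
Lemma popped0 s : popped s 0 = 0. Proof. by rewrite /popped take0. Qed.

Lemma pushed_mono s k l : k <= l -> pushed s k <= pushed s l.
Proof.
move=> /subnKC <-; elim: (l - k) => [|d IH]; first by rewrite addn0.
case: (ltnP (k + d) (size s)) => h.
  by rewrite addnS pushedS //; apply: (leq_trans IH); apply: leq_addr.
by rewrite addnS (pushed_stable h).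
Qed.
Lemma pushed_le_size s k : pushed s k <= seq_size s.
Proof.
case: (leqP (size s) k) => h; first by rewrite pushed_oversize.
by rewrite -(pushed_oversize (leqnn (size s))); apply: pushed_mono; apply: ltnW.
Qed.

Lemma wf_op_size_gt0 s k : well_formed s -> k < size s -> 0 < op_size (op_at s k).
Proof. by case=> h _ /h. Qed.
Lemma wf_popped_le_pushed s k : well_formed s -> popped s k <= pushed s k.
Proof. by case=> _ [h _]; apply: h. Qed.
Lemma wf_popped_size s : well_formed s -> popped s (size s) = seq_size s.
Proof. by case=> _ [_ h]; rewrite /popped take_size h. Qed.

Lemma state_at0 s : state_at s 0 = init (seq_size s). Proof. by rewrite /state_at take0. Qed.

Lemma inp_state_at s k : inp (state_at s k) = drop (pushed s k) (iota 1 (seq_size s)).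
Proof.
elim: k => [|k IH]; first by rewrite state_at0 pushed0 drop0.
case: (ltnP k (size s)) => h; last by rewrite (state_at_stable h) (pushed_stable h).
rewrite state_atS // pushedS //; case E: (op_at s k) => [a|b] /=.
  by rewrite IH drop_drop addnC.
by rewrite addn0.
Qed.

Lemma pushedS_le_size s k : k < size s -> pushed s k + push_size (op_at s k) <= seq_size s.
Proof. by move=> h; rewrite -pushedS //; apply: pushed_le_size. Qed.

Lemma push_support_iota s k a : k < size s -> op_at s k = Push a ->
  take a (inp (state_at s k)) = iota (pushed s k).+1 a.
Proof.
move=> h E; have := pushedS_le_size h; rewrite E /= => le.
rewrite inp_state_at drop_iota take_iota; congr iota; lia.
Qed.

Lemma size_state_at s k : well_formed s ->
  size (work (state_at s k)) = pushed s k - popped s k /\ size (out (state_at s k)) = popped s k.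
Proof.
move=> wf; elim: k => [|k [IH1 IH2]]; first by rewrite state_at0 pushed0 popped0.
case: (ltnP k (size s)) => h; last first.
  by rewrite (state_at_stable h) (pushed_stable h) (popped_stable h).
have hpq := wf_popped_le_pushed k wf; have hpq' := wf_popped_le_pushed k.+1 wf.
rewrite state_atS // pushedS // poppedS // in hpq' *; case E: (op_at s k) => [a|b] /=.
  rewrite size_cat (push_support_iota h E) size_iota IH1 addn0; split=> //; lia.
rewrite E /= in hpq'.
rewrite size_drop size_cat size_take IH1 IH2 addn0.
case: ifP => hb; split; try lia.
Qed.

Lemma state_at_perm s k : well_formed s ->
  perm_eq (work (state_at s k) ++ out (state_at s k)) (iota 1 (pushed s k)).
Proof.
move=> wf; elim: k => [|k IH]; first by rewrite state_at0 pushed0.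
case: (ltnP k (size s)) => h; last first.
  by rewrite (state_at_stable h) (pushed_stable h).
rewrite state_atS // pushedS //; case E: (op_at s k) => [a|b] /=.
  by rewrite (push_support_iota h E) iotaD -catA perm_catC add1n perm_cat2r.
rewrite addn0; apply: perm_trans IH.
by rewrite perm_catCA catA cat_take_drop.
Qed.

Lemma state_at_uniq s k : well_formed s -> uniq (work (state_at s k) ++ out (state_at s k)).
Proof. by move=> wf; rewrite (perm_uniq (state_at_perm k wf)) iota_uniq. Qed.

Lemma out_state_at_uniq s k : well_formed s -> uniq (out (state_at s k)).
Proof. by move=> wf; have := state_at_uniq k wf; rewrite cat_uniq => /and3P [].
Qed.

Lemma mem_state_at s k x : well_formed s ->
  (x \in work (state_at s k) ++ out (state_at s k)) = (0 < x <= pushed s k).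
Proof. by move=> wf; rewrite (perm_mem (state_at_perm k wf)) mem_iota add1n ltnS. Qed.

Definition elem (s : seq op) x := (0 < x) && (x <= seq_size s).

Lemma mem_iota_elem s y : (y \in iota 1 (seq_size s)) = elem s y.
Proof. by rewrite mem_iota add1n ltnS. Qed.

(* Positions of the push and of the pop that move x; meaningful only when
   [elem s x]. *)
Definition push_time (s : seq op) x := find (fun k => x <= pushed s k.+1) (iota 0 (size s)).
Definition pop_time (s : seq op) x := find (fun k => x \in out (state_at s k.+1)) (iota 0 (size s)).

Lemma elem_size_gt0 s x : elem s x -> 0 < size s.
Proof.
case/andP=> h1 h2; case: s h2 => //=; rewrite /seq_size /push_total /=.
by move=> h; lia.
Qed.

Lemma has_push_time s x : elem s x -> has (fun k => x <= pushed s k.+1) (iota 0 (size s)).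
Proof.
move=> hx; have sp := elem_size_gt0 hx; apply/hasP; exists (size s).-1.
  by rewrite mem_iota; lia.
by rewrite prednK // (pushed_oversize (leqnn _)); case/andP: hx.
Qed.

Lemma push_time_lt s x : elem s x -> push_time s x < size s.
Proof.
by move=> hx; rewrite /push_time -[X in _ < X](size_iota 0) -has_find (has_push_time hx).
Qed.

Lemma elem_le_pushed_push_time s x : elem s x -> x <= pushed s (push_time s x).+1.
Proof.
move=> hx; have := nth_find 0 (has_push_time hx); rewrite -/(push_time s x) nth_iota //.
exact: push_time_lt.
Qed.

Lemma pushed_push_time_lt s x : elem s x -> pushed s (push_time s x) < x.
Proof.
move=> hx; case E: (push_time s x) => [|k]; first by rewrite pushed0; case/andP: hx.
have : k < push_time s x by rewrite E.
move=> /(before_find 0); rewrite nth_iota ?(ltn_trans _ (push_time_lt hx)) ?E //.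
by move/negbT; rewrite -ltnNge.
Qed.

Lemma push_time_ltE s x k : elem s x -> (push_time s x < k) = (x <= pushed s k).
Proof.
move=> hx; apply/idP/idP => h.
  by apply: (leq_trans (elem_le_pushed_push_time hx)); apply: pushed_mono.
rewrite ltnNge; apply/negP => hk.
by have := leq_trans h (pushed_mono s hk); rewrite leqNgt pushed_push_time_lt.
Qed.

Lemma push_time_mono s x y : elem s x -> elem s y -> x <= y -> push_time s x <= push_time s y.
Proof.
move=> hx hy hxy; rewrite -ltnS push_time_ltE //.
by apply: (leq_trans hxy); apply: elem_le_pushed_push_time.
Qed.

Lemma push_time_eqE s x k : elem s x -> (push_time s x == k) = (pushed s k < x <= pushed s k.+1).
Proof.
move=> hx; have e1 := push_time_ltE k.+1 hx; have e2 := push_time_ltE k hx.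
rewrite ltnS in e1; rewrite eqn_leq e1 [k <= _]leqNgt e2 -ltnNge.
by rewrite andbC.
Qed.

Lemma op_at_push_time s x : elem s x -> exists a, op_at s (push_time s x) = Push a.
Proof.
move=> hx; have h1 := pushed_push_time_lt hx; have h2 := elem_le_pushed_push_time hx.
rewrite pushedS ?push_time_lt // in h2; case: (op_at s (push_time s x)) h2 => [a|b] /= h2.
  by exists a.
by rewrite addn0 in h2; lia.
Qed.

Lemma out_state_atS s k x : x \in out (state_at s k) -> x \in out (state_at s k.+1).
Proof.
case: (ltnP k (size s)) => h; last by rewrite (state_at_stable h).
by rewrite state_atS //; case: (op_at s k) => [a|b] //= hx; rewrite mem_cat hx orbT.
Qed.

Lemma out_state_at_mono s k l x : k <= l -> x \in out (state_at s k) -> x \in out (state_at s l).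
Proof.
move=> /subnKC <-; elim: (l - k) => [|d IH]; first by rewrite addn0.
by move=> hx; rewrite addnS; apply: out_state_atS; apply: IH.
Qed.

Lemma out_state_at_size s x : well_formed s -> elem s x -> x \in out (state_at s (size s)).
Proof.
move=> wf hx; have [h1 _] := size_state_at (size s) wf.
rewrite (pushed_oversize (leqnn _)) (wf_popped_size wf) subnn in h1.
have := mem_state_at (size s) x wf; rewrite (pushed_oversize (leqnn _)) -/(elem s x) hx.
by move/size0nil: h1 => ->.
Qed.

Lemma has_pop_time s x : well_formed s -> elem s x ->
  has (fun k => x \in out (state_at s k.+1)) (iota 0 (size s)).
Proof.
move=> wf hx; have sp := elem_size_gt0 hx; apply/hasP; exists (size s).-1.
  by rewrite mem_iota; lia.
by rewrite prednK //; apply: out_state_at_size.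
Qed.

Lemma pop_time_lt s x : well_formed s -> elem s x -> pop_time s x < size s.
Proof.
by move=> wf hx; rewrite /pop_time -[X in _ < X](size_iota 0) -has_find (has_pop_time wf hx).
Qed.

Lemma pop_time_out s x : well_formed s -> elem s x -> x \in out (state_at s (pop_time s x).+1).
Proof.
move=> wf hx; have := nth_find 0 (has_pop_time wf hx); rewrite -/(pop_time s x) nth_iota //.
exact: pop_time_lt.
Qed.

Lemma pop_time_notin_out s x : well_formed s -> elem s x ->
  x \notin out (state_at s (pop_time s x)).
Proof.
move=> wf hx; case E: (pop_time s x) => [|k]; first by rewrite state_at0.
have : k < pop_time s x by rewrite E.
move=> /(before_find 0); rewrite nth_iota ?(ltn_trans _ (pop_time_lt wf hx)) ?E //.
by move/negbT.
Qed.

Lemma mem_out_state_at s x k : well_formed s -> elem s x ->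
  (x \in out (state_at s k)) = (pop_time s x < k).
Proof.
move=> wf hx; apply/idP/idP => h.
  rewrite ltnNge; apply/negP => hk.
  by have := out_state_at_mono hk h; rewrite (negPf (pop_time_notin_out wf hx)).
exact: out_state_at_mono h (pop_time_out wf hx).
Qed.

Lemma mem_work_state_at s x k : well_formed s -> elem s x ->
  (x \in work (state_at s k)) = (push_time s x < k) && (k <= pop_time s x).
Proof.
move=> wf hx; have u := state_at_uniq k wf; have m := mem_state_at k x wf.
rewrite mem_cat in m; rewrite push_time_ltE // [k <= _]leqNgt -(mem_out_state_at _ wf hx).
case/andP: hx => hx1 hx2; rewrite hx1 /= in m; rewrite -m.
case hw: (x \in work (state_at s k)); case ho: (x \in out (state_at s k)) => //=.
by rewrite cat_uniq in u; case/and3P: u => _ /hasP []; exists x.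
Qed.

Lemma sorted_cat_allrel (T : eqType) (r : rel T) s1 s2 : sorted r s1 -> sorted r s2 ->
  (forall x y, x \in s1 -> y \in s2 -> r x y) -> sorted r (s1 ++ s2).
Proof.
case: s1 => [|x s1] //= h1 h2 h; rewrite cat_path h1 /=.
case: s2 h2 h => [|y s2] //= h2 h; rewrite h2 andbT; apply: h => //.
  exact: mem_last.
by rewrite inE eqxx.
Qed.

(* [work_rel s x z]: x lies above z on the working stack, and [out_rel s x z]:
   x lies above z on the output stack, whenever both are there. *)
Definition work_rel (s : seq op) x z :=
  (push_time s z < push_time s x) || (push_time s x == push_time s z) && (x < z).
Definition out_rel (s : seq op) x z :=
  (pop_time s z < pop_time s x) || (pop_time s x == pop_time s z) && work_rel s x z.

Lemma work_rel_trans s : transitive (work_rel s).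
Proof.
move=> y x z; rewrite /work_rel.
case/orP=> [h1|/andP [/eqP h1 h1']]; case/orP=> [h2|/andP [/eqP h2 h2']].
- by rewrite (ltn_trans h2 h1).
- by rewrite -h2 h1.
- by rewrite h1 h2.
- by rewrite h1 h2 eqxx (ltn_trans h1' h2') orbT.
Qed.
Lemma work_rel_asym s x z : work_rel s x z -> work_rel s z x = false.
Proof.
rewrite /work_rel; case/orP=> [h|/andP [/eqP h h']].
  by rewrite ltnNge (ltnW h) /= eq_sym (gtn_eqF h).
by rewrite h ltnn eqxx /= ltnNge (ltnW h').
Qed.
Lemma work_rel_total s x z : x != z -> work_rel s x z || work_rel s z x.
Proof.
rewrite /work_rel => nxz; case: (ltngtP (push_time s x) (push_time s z)) => h; rewrite ?h ?orbT //.
by rewrite /=; case: (ltngtP x z) nxz => //= ->; rewrite ?orbT.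
Qed.

Lemma out_rel_trans s : transitive (out_rel s).
Proof.
move=> y x z; rewrite /out_rel.
case/orP=> [h1|/andP [/eqP h1 h1']]; case/orP=> [h2|/andP [/eqP h2 h2']].
- by rewrite (ltn_trans h2 h1).
- by rewrite -h2 h1.
- by rewrite h1 h2.
- by rewrite h1 h2 eqxx (work_rel_trans h1' h2') orbT.
Qed.
Lemma out_rel_asym s x z : out_rel s x z -> out_rel s z x = false.
Proof.
rewrite /out_rel; case/orP=> [h|/andP [/eqP h h']].
  by rewrite ltnNge (ltnW h) /= eq_sym (gtn_eqF h).
by rewrite h ltnn eqxx /= work_rel_asym.
Qed.
Lemma out_rel_total s x z : x != z -> out_rel s x z || out_rel s z x.
Proof.
rewrite /out_rel => nxz; case: (ltngtP (pop_time s x) (pop_time s z)) => h; rewrite ?h ?orbT //.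
by rewrite /=; apply: work_rel_total.
Qed.

Lemma work_elem s k x : well_formed s -> x \in work (state_at s k) -> elem s x.
Proof.
move=> wf hx; have := mem_state_at k x wf; rewrite mem_cat hx /= => /esym/andP [h1 h2].
by rewrite /elem h1 (leq_trans h2 (pushed_le_size _ _)).
Qed.
Lemma out_elem s k x : well_formed s -> x \in out (state_at s k) -> elem s x.
Proof.
move=> wf hx; have := mem_state_at k x wf; rewrite mem_cat hx orbT => /esym/andP [h1 h2].
by rewrite /elem h1 (leq_trans h2 (pushed_le_size _ _)).
Qed.

Lemma work_state_at_sorted s k : well_formed s -> sorted (work_rel s) (work (state_at s k)).
Proof.
move=> wf; elim: k => [|k IH]; first by rewrite state_at0.
case: (ltnP k (size s)) => h; last by rewrite (state_at_stable h).
rewrite state_atS //; case E: (op_at s k) => [a|b] /=; last exact: drop_sorted.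
have le := pushedS_le_size h; rewrite E /= in le.
have inI y : y \in iota (pushed s k).+1 a -> elem s y /\ push_time s y = k.
  rewrite mem_iota => /andP [h1 h2]; have hy : elem s y by rewrite /elem; apply/andP; split; lia.
  split=> //; apply/eqP; rewrite push_time_eqE // pushedS // E /=; apply/andP; split; lia.
rewrite (push_support_iota h E); apply: sorted_cat_allrel => //.
- apply: (@sub_in_sorted _ (fun y => y \in iota (pushed s k).+1 a) ltn).
  + move=> x y hx hy /= hxy; rewrite /work_rel (inI _ hx).2 (inI _ hy).2 eqxx hxy orbT //.
  + by apply/allP.
  + exact: iota_ltn_sorted.
- move=> x y hx hy; rewrite /work_rel (inI _ hx).2.
  have hy' := work_elem wf hy; rewrite (mem_work_state_at _ wf hy') in hy.
  by case/andP: hy => ->.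
Qed.

Lemma sorted_index_lt (T : eqType) (r : rel T) (l : seq T) x z :
  transitive r -> (forall y w, r y w -> r w y = false) ->
  sorted r l -> x \in l -> z \in l -> r x z -> index x l < index z l.
Proof.
move=> tr asym so hx hz rxz; rewrite ltnNge leq_eqVlt; apply/negP => /orP [/eqP e|lt].
  have exz : x = z by rewrite -(nth_index x hx) -e (nth_index x hz).
  by move: (asym _ _ rxz); rewrite exz -{1}exz rxz.
by have := sorted_ltn_index tr so z x hz hx lt; rewrite asym.
Qed.

Lemma pop_time_pop s k x : well_formed s -> elem s x -> k < size s -> pop_time s x = k ->
  exists b, op_at s k = Pop b /\ x \in take b (work (state_at s k)).
Proof.
move=> wf hx h E.
have h1 : x \in out (state_at s k.+1) by rewrite mem_out_state_at // E.
have h2 : x \notin out (state_at s k) by rewrite mem_out_state_at // E ltnn.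
rewrite state_atS // in h1; case: (op_at s k) h1 => [a|b] /= h1; first by rewrite h1 in h2.
by exists b; rewrite mem_cat (negPf h2) orbF in h1.
Qed.

Lemma pop_time_support s k b x : well_formed s -> k < size s -> op_at s k = Pop b ->
  x \in take b (work (state_at s k)) -> elem s x /\ pop_time s x = k.
Proof.
move=> wf h E hx; have hw := mem_take hx; have hi := work_elem wf hw.
split=> //; rewrite (mem_work_state_at _ wf hi) in hw; case/andP: hw => _ hk.
have : x \in out (state_at s k.+1) by rewrite state_atS // E /= mem_cat hx.
by rewrite (mem_out_state_at _ wf hi) ltnS => hk'; apply/eqP; rewrite eqn_leq hk' hk.
Qed.

Lemma out_state_at_sorted s k : well_formed s -> sorted (out_rel s) (out (state_at s k)).
Proof.
move=> wf; elim: k => [|k IH]; first by rewrite state_at0.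
case: (ltnP k (size s)) => h; last by rewrite (state_at_stable h).
rewrite state_atS //; case E: (op_at s k) => [a|b] //=.
apply: sorted_cat_allrel => //.
- apply: (@sub_in_sorted _ (fun y => y \in take b (work (state_at s k))) (work_rel s)).
  + move=> x y hx hy /= hxy.
    rewrite /out_rel (pop_time_support wf h E hx).2 (pop_time_support wf h E hy).2.
    by rewrite eqxx hxy orbT.
  + by apply/allP.
  + exact/take_sorted/work_state_at_sorted.
- move=> x y hx hy; rewrite /out_rel (pop_time_support wf h E hx).2.
  by rewrite -(mem_out_state_at _ wf (out_elem wf hy)) hy.
Qed.

Lemma producedE s : produced s = out (state_at s (size s)).
Proof. by rewrite /produced /state_at take_size. Qed.

Lemma index_produced_ltE s x z : well_formed s -> elem s x -> elem s z ->
  (index x (produced s) < index z (produced s)) = out_rel s x z.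
Proof.
move=> wf hx hz; rewrite producedE.
have idx := sorted_index_lt (@out_rel_trans s) (@out_rel_asym s) (out_state_at_sorted (size s) wf).
have ix := out_state_at_size wf hx; have iz := out_state_at_size wf hz.
apply/idP/idP => h; last exact: idx.
case: (eqVneq x z) => [exz|nxz]; first by subst; rewrite ltnn in h.
case/orP: (out_rel_total s nxz) => // hzx.
have := idx _ _ iz ix hzx.
by rewrite ltnNge (ltnW h).
Qed.

Lemma op_at_pop_time s x : well_formed s -> elem s x ->
  exists b, op_at s (pop_time s x) = Pop b /\ x \in take b (work (state_at s (pop_time s x))).
Proof. by move=> wf hx; apply: pop_time_pop => //; apply: pop_time_lt. Qed.

Lemma push_time_lt_pop_time s x : well_formed s -> elem s x -> push_time s x < pop_time s x.
Proof.
move=> wf hx; case: (op_at_pop_time wf hx) => b [_ /mem_take].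
by rewrite (mem_work_state_at _ wf hx) => /andP [].
Qed.

Lemma pop_time_lifo s x z : well_formed s -> elem s x -> elem s z ->
  push_time s z < pop_time s x -> work_rel s z x -> pop_time s z <= pop_time s x.
Proof.
move=> wf hx hz h1 h2; case: (ltnP (pop_time s z) (pop_time s x)) => [/ltnW //|h3].
case: (op_at_pop_time wf hx) => b [E hb].
have hzw : z \in work (state_at s (pop_time s x)) by rewrite (mem_work_state_at _ wf hz) h1 h3.
have hxw := mem_take hb.
have := sorted_index_lt (@work_rel_trans s) (@work_rel_asym s) (work_state_at_sorted _ wf)
  hzw hxw h2.
rewrite (in_take _ hxw) in hb => hi.
have hzt : z \in take b (work (state_at s (pop_time s x))).
  by rewrite (in_take _ hzw) (ltn_trans hi hb).
by rewrite (pop_time_support wf (pop_time_lt wf hx) E hzt).2.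
Qed.

Lemma push_time_neq_pop_time s x y : well_formed s -> elem s x -> elem s y ->
  push_time s x != pop_time s y.
Proof.
move=> wf hx hy; case: (op_at_push_time hx) => a E; case: (op_at_pop_time wf hy) => b [E' _].
by apply/eqP => e; rewrite e E' in E.
Qed.

Lemma mem_support_push s k a x : well_formed s -> k < size s -> op_at s k = Push a ->
  (x \in Defs.support s k) = elem s x && (push_time s x == k).
Proof.
move=> wf h E; rewrite /Defs.support -/(op_at s k) E -/(state_at s k).
rewrite (push_support_iota h E) mem_iota.
have le := pushedS_le_size h; rewrite E /= in le.
apply/idP/idP.
  move=> /andP [h1 h2]; have hx : elem s x by rewrite /elem; apply/andP; split; lia.
  by rewrite hx push_time_eqE // pushedS // E /=; apply/andP; split; lia.
case/andP=> hx; rewrite push_time_eqE // pushedS // E /= => /andP [h1 h2]; apply/andP; split; lia.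
Qed.

Lemma mem_support_pop s k b x : well_formed s -> k < size s -> op_at s k = Pop b ->
  (x \in Defs.support s k) = elem s x && (pop_time s x == k).
Proof.
move=> wf h E; rewrite /Defs.support -/(op_at s k) E -/(state_at s k).
apply/idP/idP.
  by move=> hx; have [h1 h2] := pop_time_support wf h E hx; rewrite h1 h2 eqxx.
case/andP=> hx /eqP e; case: (pop_time_pop wf hx h e) => b' [E' hb].
by rewrite E in E'; case: E' => ->.
Qed.

Lemma reduced_peak s k : reduced s -> k.+1 < size s ->
  ~~ is_pop (op_at s k) -> is_pop (op_at s k.+1) ->
  op_at s k = Push 1 /\ op_at s k.+1 = Pop 1 /\ elem s (pushed s k).+1 /\
  push_time s (pushed s k).+1 = k /\ pop_time s (pushed s k).+1 = k.+1.
Proof.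
case=> wf red h hn hp.
case E: (op_at s k) hn => [a|a'] // _.
case E': (op_at s k.+1) hp => [b'|b] // _.
case: (red _ _ _ h E E') => ea eb; subst a b.
have hk : k < size s by apply: ltnW.
have le := pushedS_le_size hk; rewrite E /= in le.
have hx : elem s (pushed s k).+1.
  by rewrite /elem; apply/andP; split; lia.
have hpu : push_time s (pushed s k).+1 = k.
  by apply/eqP; rewrite push_time_eqE // pushedS // E /=; apply/andP; split; lia.
do 4!split => //; apply/eqP.
have := mem_support_pop (pushed s k).+1 wf h E'.
rewrite hx /= => <-.
rewrite /Defs.support -/(op_at s k.+1) E' -/(state_at s k.+1) state_atS // E /=.
by rewrite -/(state_at s k) (push_support_iota hk E) /= inE eqxx.
Qed.

Lemma push_first_elem s k a : well_formed s -> k < size s -> op_at s k = Push a ->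
  elem s (pushed s k).+1 /\ push_time s (pushed s k).+1 = k.
Proof.
move=> wf h E; have le := pushedS_le_size h; rewrite E /= in le.
have := wf_op_size_gt0 wf h; rewrite E /= => ha.
have hx : elem s (pushed s k).+1 by rewrite /elem; apply/andP; split; lia.
by split=> //; apply/eqP; rewrite push_time_eqE // pushedS // E /=; apply/andP; split; lia.
Qed.

Lemma pop_has_elem s k b : well_formed s -> k < size s -> op_at s k = Pop b ->
  exists z, elem s z /\ pop_time s z = k.
Proof.
move=> wf h E; have := wf_op_size_gt0 wf h; rewrite E /= => hb.
have hp := wf_popped_le_pushed k.+1 wf; rewrite pushedS // poppedS // E /= addn0 in hp.
have [sz _] := size_state_at k wf.
case Ew: (work (state_at s k)) sz => [|w0 w] /= sz; first by lia.
have hin : w0 \in take b (work (state_at s k)).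
  by rewrite Ew; move: hb; clear; case: b => //= b _; rewrite inE eqxx.
by exists w0; apply: (pop_time_support wf h E hin).
Qed.

Lemma vertexE s k : vertex s k = (pushed s k + popped s k, (pushed s k)%:Z - (popped s k)%:Z)%R.
Proof.
elim: k => [|k IH]; first by rewrite /vertex take0 pushed0 popped0.
case: (ltnP k (size s)) => h; last first.
  have e : vertex s k.+1 = vertex s k by rewrite /vertex !take_oversize // (leqW h).
  by rewrite e IH (pushed_stable h) (popped_stable h).
rewrite /vertex (take_nth (Push 0) h) foldl_rcons -/(vertex s k) IH.
rewrite pushedS // poppedS // -/(op_at s k).
case: (op_at s k) => [a|b] /=; congr pair; rewrite ?addn0; try lia.
Qed.

Lemma out_suffix s k l : k <= l -> exists X, out (state_at s l) = X ++ out (state_at s k).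
Proof.
move=> /subnKC <-; elim: (l - k) => [|d IH]; first by exists [::]; rewrite addn0.
case: IH => X HX; rewrite addnS.
case: (ltnP (k + d) (size s)) => h; last by exists X; rewrite (state_at_stable h).
rewrite state_atS //; case: (op_at s (k + d)) => [a|b] /=; first by exists X.
by exists (take b (work (state_at s (k + d))) ++ X); rewrite HX catA.
Qed.

Lemma out_state_atE s k : well_formed s ->
  out (state_at s k) = drop (seq_size s - popped s k) (produced s).
Proof.
move=> wf; case: (leqP k (size s)) => h; last first.
  rewrite state_at_oversize ?(ltnW h) // popped_oversize ?(ltnW h) //.
  by rewrite (wf_popped_size wf) subnn drop0 producedE.
case: (out_suffix s h) => X HX; rewrite producedE HX.
have [_ s1] := size_state_at (size s) wf; have [_ s2] := size_state_at k wf.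
rewrite HX size_cat s2 (wf_popped_size wf) in s1.
have -> : seq_size s - popped s k = size X by lia.
by rewrite drop_size_cat.
Qed.

Lemma popped_count s k : well_formed s ->
  popped s k = count (fun w => pop_time s w < k) (iota 1 (seq_size s)).
Proof.
move=> wf; have [_ <-] := size_state_at k wf; rewrite -size_filter; apply: perm_size.
apply: uniq_perm.
- exact: out_state_at_uniq.
- by apply: filter_uniq; apply: iota_uniq.
move=> w; rewrite mem_filter mem_iota add1n ltnS.
case hw: (0 < w <= seq_size s).
  by rewrite andbT; apply: mem_out_state_at.
by rewrite andbF; apply/negP => /(out_elem wf); rewrite /elem hw.
Qed.

Lemma pop1_elem_unique s k y y' : well_formed s -> elem s y -> elem s y' -> k < size s ->
  op_at s k = Pop 1 -> pop_time s y = k -> pop_time s y' = k -> y = y'.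
Proof.
move=> wf hy hy' h E e e'; case: (pop_time_pop wf hy h e) => b [E1 h1].
case: (pop_time_pop wf hy' h e') => b' [E2 h2].
rewrite E in E1 E2; case: E1 => <- in h1; case: E2 => <- in h2.
case: (work (state_at s k)) h1 h2 => //= w0 w; rewrite take0 !inE => /eqP -> /eqP ->; done.
Qed.

Lemma reduced_peak_after s x t : reduced s -> elem s x ->
  push_time s x < t -> t < size s -> is_pop (op_at s t) ->
  exists2 e, elem s e & [/\ x <= e, pop_time s e <= t & op_at s (pop_time s e) = Pop 1].
Proof.
move=> red hx xt ht pt.
have ex : exists k, (push_time s x < k) && is_pop (op_at s k) && (k < size s).
  by exists t; rewrite xt pt ht.
case: (ex_minnP ex) => k0 /andP [/andP [h1 h2] h3] hmin.
have k0pos : 0 < k0 by lia.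
have hk : (k0.-1).+1 < size s by rewrite prednK.
have hnp : ~~ is_pop (op_at s k0.-1).
  case: (ltngtP (push_time s x) k0.-1) => c; first last.
  - by rewrite -c; case: (op_at_push_time hx) => a ->.
  - by lia.
  apply/negP => hp; have := hmin k0.-1; rewrite c hp /= => /(_ (ltnW hk)).
  by lia.
have hp0 : is_pop (op_at s k0.-1.+1) by rewrite prednK.
have [E1 [E2 [he [pue poe]]]] := reduced_peak red hk hnp hp0.
exists (pushed s k0.-1).+1 => //; split; last by rewrite poe.
- rewrite leqNgt; apply/negP => c.
  have := push_time_mono he hx (ltnW c); rewrite pue => c2.
  have c3 : push_time s x = k0.-1 by lia.
  by have := elem_le_pushed_push_time hx; rewrite c3 pushedS ?(ltnW hk) // E1 /=; lia.
- by rewrite poe prednK //; apply: hmin; rewrite xt pt ht.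
Qed.

Definition output_before (s : seq op) x z := index x (produced s) < index z (produced s).

Definition all_ge_output_before (s : seq op) w x :=
  all (fun y => output_before s y w) [seq y <- iota 1 (seq_size s) | x <= y].

Lemma output_before_irr s x : output_before s x x = false.
Proof. by rewrite /output_before ltnn. Qed.

(* The backward direction uses that the first pop after the push of
   x ends a peak [sigma tau] whose element is >= x and not output after w. *)
Lemma pop_before_push_iff s w x : reduced s -> elem s w -> elem s x ->
  (pop_time s w < push_time s x) = all_ge_output_before s w x.
Proof.
move=> red hw hx; have wf := red.1.
apply/idP/idP => h.
  apply/allP => y; rewrite mem_filter mem_iota_elem => /andP [hxy hy].
  rewrite /output_before index_produced_ltE // /out_rel; apply/orP; left.
  apply: (leq_trans h); apply: (leq_trans (push_time_mono hx hy hxy)); apply: ltnW.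
  exact: push_time_lt_pop_time.
move: h; apply: contraTT; rewrite -leqNgt leq_eqVlt.
rewrite (negPf (push_time_neq_pop_time wf hx hw)) /= => h.
have popw : is_pop (op_at s (pop_time s w)) by case: (op_at_pop_time wf hw) => b [-> _].
have [e he [xe ew E1]] := reduced_peak_after red hx h (pop_time_lt wf hw) popw.
apply/negP => /allP /(_ e); rewrite mem_filter mem_iota_elem he xe => /(_ isT).
case: (eqVneq w e) => [<-|nwe]; first by rewrite output_before_irr.
rewrite /output_before index_produced_ltE // /out_rel.
case: (eqVneq (pop_time s e) (pop_time s w)) => [ew'|_].
  have E1' : op_at s (pop_time s w) = Pop 1 by rewrite -ew'.
  have := pop1_elem_unique wf hw he (pop_time_lt wf hw) E1' erefl ew'.
  by move/eqP; rewrite (negPf nwe).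
by rewrite (ltnNge _ (pop_time s e)) ew.
Qed.

Definition equiv_reduced (a b : seq op) :=
  [/\ reduced a, reduced b, seq_size a = seq_size b & produced a = produced b].

Lemma equivalent_reduced a b : reduced a -> reduced b -> equivalent a b -> equiv_reduced a b.
Proof. by move=> ra rb [_ _ e1 e2]; split. Qed.

Lemma equiv_reduced_sym a b : equiv_reduced a b -> equiv_reduced b a.
Proof. by case=> h1 h2 h3 h4; split. Qed.

Lemma equiv_reduced_wf1 a b : equiv_reduced a b -> well_formed a.
Proof. by case=> [[]]. Qed.

Lemma equiv_reduced_wf2 a b : equiv_reduced a b -> well_formed b.
Proof. by case=> _ []. Qed.

Lemma equiv_reduced_elem a b x : equiv_reduced a b -> elem a x = elem b x.
Proof. by case=> _ _ e _; rewrite /elem e. Qed.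

Lemma equiv_reduced_out_rel a b x z : equiv_reduced a b -> elem a x -> elem a z ->
  out_rel a x z = out_rel b x z.
Proof.
move=> h hx hz; have wa := equiv_reduced_wf1 h; have wb := equiv_reduced_wf2 h.
rewrite -index_produced_ltE // -(index_produced_ltE wb) -?(equiv_reduced_elem _ h) //.
by case: h => _ _ _ ->.
Qed.

Lemma equiv_reduced_pop_before_push a b w x : equiv_reduced a b -> elem a w -> elem a x ->
  (pop_time a w < push_time a x) = (pop_time b w < push_time b x).
Proof.
move=> h hw hx; case: (h) => ra rb e1 e2.
rewrite pop_before_push_iff // pop_before_push_iff -?(equiv_reduced_elem _ h) //.
by rewrite /all_ge_output_before /output_before e1 e2.
Qed.

Lemma split_push_flips_pop s1 s2 x y : equiv_reduced s1 s2 -> elem s1 x -> elem s1 y -> x < y ->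
  push_time s1 x = push_time s1 y -> push_time s2 x != push_time s2 y ->
  (pop_time s1 x == pop_time s1 y) = (pop_time s2 x != pop_time s2 y).
Proof.
move=> h hx hy xy e1 n2; have w1 := equiv_reduced_wf1 h; have w2 := equiv_reduced_wf2 h.
have hx2 : elem s2 x by rewrite -(equiv_reduced_elem _ h).
have hy2 : elem s2 y by rewrite -(equiv_reduced_elem _ h).
have p2 : push_time s2 x < push_time s2 y by rewrite ltn_neqAle n2 push_time_mono // ltnW.
have D := equiv_reduced_pop_before_push h hx hy.
rewrite -e1 ltnNge (ltnW (push_time_lt_pop_time w1 hx)) /= in D.
have D2 : push_time s2 y < pop_time s2 x.
  by rewrite ltn_neqAle (push_time_neq_pop_time w2 hy2 hx2) leqNgt -D.
have l2 := pop_time_lifo w2 hx2 hy2 D2 (introT orP (or_introl p2)).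
have l1 : pop_time s1 x <= pop_time s1 y.
  apply: (pop_time_lifo w1 hy hx); first by rewrite e1; apply: push_time_lt_pop_time.
  by rewrite /work_rel e1 eqxx xy orbT.
have := equiv_reduced_out_rel h hx hy; rewrite /out_rel /work_rel e1 eqxx xy ltnn /=.
rewrite !andbT (ltnNge (push_time s2 y)) (ltnW p2) (negPf n2) /= andbF orbF.
rewrite [pop_time s1 y < _]ltnNge l1 /= => ->.
by rewrite neq_ltn [pop_time s2 x < _]ltnNge l2.
Qed.

Lemma split_pop_flips_push s1 s2 x y : equiv_reduced s1 s2 -> elem s1 x -> elem s1 y -> x != y ->
  pop_time s1 x = pop_time s1 y -> pop_time s2 x != pop_time s2 y -> output_before s1 x y ->
  (push_time s1 x == push_time s1 y) = (push_time s2 x != push_time s2 y).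
Proof.
move=> h hx hy nxy e1 n2 pr; have w1 := equiv_reduced_wf1 h; have w2 := equiv_reduced_wf2 h.
have hx2 : elem s2 x by rewrite -(equiv_reduced_elem _ h).
have hy2 : elem s2 y by rewrite -(equiv_reduced_elem _ h).
have D := equiv_reduced_pop_before_push h hy hx.
rewrite -e1 ltnNge (ltnW (push_time_lt_pop_time w1 hx)) /= in D.
have D2 : push_time s2 x < pop_time s2 y.
  by rewrite ltn_neqAle (push_time_neq_pop_time w2 hx2 hy2) leqNgt -D.
have k1 : out_rel s1 x y by rewrite -(index_produced_ltE w1).
have k2 : out_rel s2 x y by rewrite -(equiv_reduced_out_rel h).
have p2 : pop_time s2 y < pop_time s2 x.
  by move: k2; rewrite /out_rel (negPf n2) andFb orbF.
have sr1 : work_rel s1 x y by move: k1; rewrite /out_rel e1 ltnn eqxx.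
have sr2 : work_rel s2 y x.
  case/orP: (work_rel_total s2 nxy) => // c.
  by have := pop_time_lifo w2 hy2 hx2 D2 c; rewrite leqNgt p2.
case: (ltngtP x y) nxy => // c _.
  have q1 : push_time s1 x <= push_time s1 y by apply: push_time_mono => //; apply: ltnW.
  have q2 : push_time s2 x <= push_time s2 y by apply: push_time_mono => //; apply: ltnW.
  move: sr1 sr2; rewrite /work_rel.
  move=> /orP [t|/andP [t _]]; first by lia.
  move=> /orP [t'|/andP [_ t']]; last by lia.
  by rewrite t neq_ltn t'.
have q1 : push_time s1 y <= push_time s1 x by apply: push_time_mono => //; apply: ltnW.
have q2 : push_time s2 y <= push_time s2 x by apply: push_time_mono => //; apply: ltnW.
move: sr1 sr2; rewrite /work_rel.
move=> /orP [t|/andP [_ t]]; last by lia.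
move=> /orP [t'|/andP [t' _]]; first by lia.
by rewrite (gtn_eqF t) eq_sym t'.
Qed.

Lemma split_push_flips_pop_sym s1 s2 x y : equiv_reduced s1 s2 -> elem s1 x -> elem s1 y ->
  push_time s1 x = push_time s1 y -> push_time s2 x != push_time s2 y ->
  (pop_time s1 x == pop_time s1 y) = (pop_time s2 x != pop_time s2 y).
Proof.
move=> h hx hy e n; case: (ltngtP x y) => c; first exact: split_push_flips_pop.
  rewrite eq_sym [pop_time s2 x == _]eq_sym.
  by apply: split_push_flips_pop => //; rewrite eq_sym.
by move: n; rewrite c eqxx.
Qed.

Lemma split_pop_flips_push_sym s1 s2 x y : equiv_reduced s1 s2 -> elem s1 x -> elem s1 y ->
  pop_time s1 x = pop_time s1 y -> pop_time s2 x != pop_time s2 y ->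
  (push_time s1 x == push_time s1 y) = (push_time s2 x != push_time s2 y).
Proof.
move=> h hx hy e n; have w1 := equiv_reduced_wf1 h.
case: (eqVneq x y) n => [->|nxy n]; first by rewrite eqxx.
have : output_before s1 x y || output_before s1 y x.
  by rewrite /output_before !index_produced_ltE //; apply: out_rel_total.
case/orP => p; first exact: split_pop_flips_push.
rewrite eq_sym [push_time s2 x == _]eq_sym.
by apply: split_pop_flips_push => //; rewrite eq_sym.
Qed.

(* Both directions follow from the last-in-first-out discipline
   [pop_time_lifo], since the output order and [pop_before_push_iff] are shared
   by equivalent sequences. *)
Lemma push_flip_pop_flip s1 s2 x y : equiv_reduced s1 s2 -> elem s1 x -> elem s1 y ->
  ((push_time s1 x == push_time s1 y) != (push_time s2 x == push_time s2 y)) =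
  ((pop_time s1 x == pop_time s1 y) != (pop_time s2 x == pop_time s2 y)).
Proof.
move=> h hx hy; have h' := equiv_reduced_sym h.
have hx2 : elem s2 x by rewrite -(equiv_reduced_elem _ h).
have hy2 : elem s2 y by rewrite -(equiv_reduced_elem _ h).
case e1: (push_time s1 x == push_time s1 y); case e2: (push_time s2 x == push_time s2 y);
  case f1: (pop_time s1 x == pop_time s1 y); case f2: (pop_time s2 x == pop_time s2 y) => //=.
all: try by have := split_push_flips_pop_sym h hx hy (eqP e1) (negbT e2); rewrite f1 f2.
all: try by have := split_push_flips_pop_sym h' hx2 hy2 (eqP e2) (negbT e1); rewrite f1 f2.
all: try by have := split_pop_flips_push_sym h hx hy (eqP f1) (negbT f2); rewrite e1 e2.
all: by have := split_pop_flips_push_sym h' hx2 hy2 (eqP f2) (negbT f1); rewrite e1 e2.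
Qed.

Lemma elem_lt_of_push_time_lt s x y : elem s x -> elem s y ->
  push_time s x < push_time s y -> x < y.
Proof.
move=> hx hy h; rewrite ltnNge; apply/negP => c.
by have := push_time_mono hy hx c; rewrite leqNgt h.
Qed.

(* An element z popped strictly between two elements a, b of one push keeps
   every other element y in that push: otherwise y would be popped together
   with a in one sequence and with b in the other, and z would be output on
   different sides of y. *)
Lemma push_class_stable_between s1 s2 a b z y : equiv_reduced s1 s2 ->
  elem s1 a -> elem s1 b -> elem s1 z -> elem s1 y ->
  push_time s1 a = push_time s1 b -> push_time s2 a = push_time s2 b ->
  pop_time s1 a < pop_time s1 z < pop_time s1 b ->
  pop_time s2 a < pop_time s2 z < pop_time s2 b ->
  (push_time s1 y == push_time s1 a) = (push_time s2 y == push_time s2 a).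
Proof.
move=> h ha hb hz hy ab1 ab2 /andP [az1 zb1] /andP [az2 zb2].
case: (eqVneq (push_time s1 y == push_time s1 a) (push_time s2 y == push_time s2 a)) => [//|flip_a].
have flip_b : (push_time s1 y == push_time s1 b) != (push_time s2 y == push_time s2 b).
  by rewrite -ab1 -ab2.
rewrite push_flip_pop_flip // in flip_a; rewrite push_flip_pop_flip // in flip_b.
case: (eqVneq (pop_time s1 y) (pop_time s1 a)) flip_a flip_b => c1;
  case: (eqVneq (pop_time s2 y) (pop_time s2 a)) => c2 //=;
  case: (eqVneq (pop_time s1 y) (pop_time s1 b)) => c3;
  case: (eqVneq (pop_time s2 y) (pop_time s2 b)) => c4 //= _ _; try lia.
- have : out_rel s1 z y by rewrite /out_rel c1 az1.
  rewrite (equiv_reduced_out_rel h hz hy) /out_rel c4.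
  by case/orP => [|/andP [/eqP]]; lia.
- have : out_rel s1 y z by rewrite /out_rel c3 zb1.
  rewrite (equiv_reduced_out_rel h hy hz) /out_rel c2.
  by case/orP => [|/andP [/eqP]]; lia.
Qed.

Lemma push_class_stable s1 s2 a b z y : equiv_reduced s1 s2 ->
  elem s1 a -> elem s1 b -> elem s1 z -> elem s1 y ->
  push_time s1 a = push_time s1 b -> pop_time s1 a < pop_time s1 z < pop_time s1 b ->
  pop_time s1 a < push_time s1 z ->
  (push_time s1 y == push_time s1 a) = (push_time s2 y == push_time s2 a).
Proof.
move=> h ha hb hz hy e1 /andP [az zb] az'.
have w1 := equiv_reduced_wf1 h; have w2 := equiv_reduced_wf2 h.
have ha2 : elem s2 a by rewrite -(equiv_reduced_elem _ h).
have hz2 : elem s2 z by rewrite -(equiv_reduced_elem _ h).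
have ab : a < b.
  case: (ltngtP a b) => // c; last by move: az zb; rewrite c; lia.
  have p1 : push_time s1 b < pop_time s1 a by rewrite -e1; apply: push_time_lt_pop_time.
  have p2 : work_rel s1 b a by rewrite /work_rel e1 eqxx c orbT.
  by have := pop_time_lifo w1 ha hb p1 p2; lia.
have D : pop_time s2 a < push_time s2 z by rewrite -(equiv_reduced_pop_before_push h ha hz).
have pz2 := push_time_lt_pop_time w2 hz2.
have kbz : out_rel s2 b z by rewrite -(equiv_reduced_out_rel h) // /out_rel zb.
have e2 : push_time s2 a = push_time s2 b.
  apply/eqP; apply/negP => n.
  have := split_push_flips_pop h ha hb ab e1 (introT negP n).
  rewrite (ltn_eqF (ltn_trans az zb)) => /esym/negbFE/eqP e.
  by move: kbz; rewrite /out_rel -e => /orP [c|/andP [/eqP c _]]; lia.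
have ab2 : pop_time s2 a < pop_time s2 b.
  have : out_rel s2 b a by rewrite -(equiv_reduced_out_rel h) // /out_rel (ltn_trans az zb).
  by rewrite /out_rel /work_rel e2 ltnn eqxx /= => /orP [//|/andP [_ c]]; lia.
have zb2 : pop_time s2 z < pop_time s2 b.
  move: kbz; rewrite /out_rel /work_rel => /orP [//|/andP [_ /orP [c|/andP [/eqP c _]]]];
  have := push_time_lt_pop_time w2 ha2; lia.
apply: (push_class_stable_between h ha hb hz hy e1 e2); apply/andP; split => //; lia.
Qed.

(* Dually, an element z pushed strictly between two elements of one pop keeps
   that pop together, because the elements are pushed in increasing order. *)
Lemma pop_class_stable_between s1 s2 a b z y : equiv_reduced s1 s2 ->
  elem s1 a -> elem s1 b -> elem s1 z -> elem s1 y ->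
  pop_time s1 a = pop_time s1 b -> pop_time s2 a = pop_time s2 b ->
  push_time s1 a < push_time s1 z < push_time s1 b ->
  push_time s2 a < push_time s2 z < push_time s2 b ->
  (pop_time s1 y == pop_time s1 a) = (pop_time s2 y == pop_time s2 a).
Proof.
move=> h ha hb hz hy ab1 ab2 /andP [az1 zb1] /andP [az2 zb2].
have hy2 : elem s2 y by rewrite -(equiv_reduced_elem _ h).
have hz2 : elem s2 z by rewrite -(equiv_reduced_elem _ h).
case: (eqVneq (pop_time s1 y == pop_time s1 a) (pop_time s2 y == pop_time s2 a)) => [//|flip_a].
have flip_b : (pop_time s1 y == pop_time s1 b) != (pop_time s2 y == pop_time s2 b).
  by rewrite -ab1 -ab2.
rewrite -push_flip_pop_flip // in flip_a; rewrite -push_flip_pop_flip // in flip_b.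
case: (eqVneq (push_time s1 y) (push_time s1 a)) flip_a flip_b => c1;
  case: (eqVneq (push_time s2 y) (push_time s2 a)) => c2 //=;
  case: (eqVneq (push_time s1 y) (push_time s1 b)) => c3;
  case: (eqVneq (push_time s2 y) (push_time s2 b)) => c4 //= _ _; try lia.
- have yz : y < z by apply: (elem_lt_of_push_time_lt hy hz); rewrite c1.
  have zy : z < y by apply: (elem_lt_of_push_time_lt hz2 hy2); rewrite c4.
  lia.
- have zy : z < y by apply: (elem_lt_of_push_time_lt hz hy); rewrite c3.
  have yz : y < z by apply: (elem_lt_of_push_time_lt hy2 hz2); rewrite c2.
  lia.
Qed.

Lemma pop_class_stable s1 s2 a b z y : equiv_reduced s1 s2 ->
  elem s1 a -> elem s1 b -> elem s1 z -> elem s1 y ->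
  pop_time s1 a = pop_time s1 b -> push_time s1 a < push_time s1 z < push_time s1 b ->
  pop_time s1 z < push_time s1 b ->
  (pop_time s1 y == pop_time s1 a) = (pop_time s2 y == pop_time s2 a).
Proof.
move=> h ha hb hz hy e1 /andP [az zb] zb'.
have w1 := equiv_reduced_wf1 h; have w2 := equiv_reduced_wf2 h.
have ha2 : elem s2 a by rewrite -(equiv_reduced_elem _ h).
have hb2 : elem s2 b by rewrite -(equiv_reduced_elem _ h).
have hz2 : elem s2 z by rewrite -(equiv_reduced_elem _ h).
have az1 := elem_lt_of_push_time_lt ha hz az.
have D1 : push_time s2 b < pop_time s2 a.
  have := equiv_reduced_pop_before_push h ha hb.
  rewrite e1 ltnNge (ltnW (push_time_lt_pop_time w1 hb)) /= => D.
  by rewrite ltn_neqAle (push_time_neq_pop_time w2 hb2 ha2) leqNgt -D.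
have Dz : pop_time s2 z < push_time s2 b by rewrite -(equiv_reduced_pop_before_push h hz hb).
have pz2 := push_time_lt_pop_time w2 hz2.
have az2 : push_time s2 a < push_time s2 z.
  rewrite ltn_neqAle (push_time_mono ha2 hz2 (ltnW az1)) andbT; apply/eqP => e.
  have p1 : push_time s2 a < pop_time s2 z by rewrite e.
  have p2 : work_rel s2 a z by rewrite /work_rel e eqxx az1 orbT.
  by have := pop_time_lifo w2 hz2 ha2 p1 p2; lia.
have e2 : pop_time s2 a = pop_time s2 b.
  have ab2 : push_time s2 a < push_time s2 b by lia.
  have l2 := pop_time_lifo w2 ha2 hb2 D1 (introT orP (or_introl ab2)).
  have : out_rel s2 b a.
    by rewrite -(equiv_reduced_out_rel h) // /out_rel e1 eqxx ltnn /work_rel (ltn_trans az zb).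
  by rewrite /out_rel => /orP [c|/andP [/eqP c _]]; lia.
apply: (pop_class_stable_between h ha hb hz hy e1 e2); apply/andP; split => //; lia.
Qed.

Lemma equiv_reduced_push_before_pop a b w x : equiv_reduced a b -> elem a w -> elem a x ->
  (push_time a w < pop_time a x) = (push_time b w < pop_time b x).
Proof.
move=> h hw hx; have w1 := equiv_reduced_wf1 h; have w2 := equiv_reduced_wf2 h.
have hw2 : elem b w by rewrite -(equiv_reduced_elem _ h).
have hx2 : elem b x by rewrite -(equiv_reduced_elem _ h).
rewrite !ltn_neqAle (push_time_neq_pop_time w1 hw hx) (push_time_neq_pop_time w2 hw2 hx2).
rewrite [push_time a w <= _]leqNgt [push_time b w <= _]leqNgt.
by rewrite (equiv_reduced_pop_before_push h hx hw).
Qed.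

Lemma pop_time_lt_out_rel s t w :
  (pop_time s w < pop_time s t) = (pop_time s w != pop_time s t) && out_rel s t w.
Proof. by rewrite /out_rel; case: ltngtP. Qed.

Lemma pushed_count s k : pushed s k = count (fun w => push_time s w < k) (iota 1 (seq_size s)).
Proof.
rewrite -size_filter (@eq_in_filter _ _ (fun w => w < 1 + pushed s k)).
  by rewrite filter_iota_ltn ?size_iota ?pushed_le_size.
by move=> w; rewrite mem_iota_elem => hw; rewrite push_time_ltE // add1n ltnS.
Qed.

Lemma vertex_eq s1 s2 k k' : well_formed s1 -> well_formed s2 -> seq_size s1 = seq_size s2 ->
  (forall w, elem s1 w -> (push_time s1 w < k) = (push_time s2 w < k')) ->
  (forall w, elem s1 w -> (pop_time s1 w < k) = (pop_time s2 w < k')) ->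
  vertex s2 k' = vertex s1 k.
Proof.
move=> w1 w2 en Hpu Hpo.
have ep : pushed s1 k = pushed s2 k'.
  by rewrite !pushed_count -en; apply: eq_in_count => w; rewrite mem_iota_elem; exact: Hpu.
have eq : popped s1 k = popped s2 k'.
  by rewrite !popped_count // -en; apply: eq_in_count => w; rewrite mem_iota_elem; exact: Hpo.
by rewrite !vertexE ep eq.
Qed.

Lemma push_class_pushed s1 s2 k k' a a' : equiv_reduced s1 s2 -> k < size s1 -> k' < size s2 ->
  op_at s1 k = Push a -> op_at s2 k' = Push a' ->
  (forall y, elem s1 y -> (push_time s1 y == k) = (push_time s2 y == k')) ->
  pushed s1 k = pushed s2 k' /\ pushed s1 k.+1 = pushed s2 k'.+1.
Proof.
move=> h h1 h2 E1 E2 H; have w1 := equiv_reduced_wf1 h; have w2 := equiv_reduced_wf2 h.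
have [hx pux] := push_first_elem w1 h1 E1; have [hx' pux'] := push_first_elem w2 h2 E2.
have hx1' : elem s1 (pushed s2 k').+1 by rewrite (equiv_reduced_elem _ h).
have hx2 : elem s2 (pushed s1 k).+1 by rewrite -(equiv_reduced_elem _ h).
have q1 : push_time s2 (pushed s1 k).+1 = k' by apply/eqP; rewrite -H // pux.
have q2 : push_time s1 (pushed s2 k').+1 = k by apply/eqP; rewrite H // pux'.
have ep : pushed s1 k = pushed s2 k'.
  by have := pushed_push_time_lt hx2; have := pushed_push_time_lt hx1'; rewrite q1 q2; clear H; lia.
have a1 := wf_op_size_gt0 w1 h1; have a2 := wf_op_size_gt0 w2 h2.
have s1e := pushedS h1; have s2e := pushedS h2.
rewrite E1 /= in a1 s1e; rewrite E2 /= in a2 s2e.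
have hy1 : elem s1 (pushed s1 k.+1) by rewrite /elem pushed_le_size; clear H; lia.
have hy2 : elem s2 (pushed s2 k'.+1) by rewrite /elem pushed_le_size; clear H; lia.
have hy1' : elem s2 (pushed s1 k.+1) by rewrite -(equiv_reduced_elem _ h).
have hy2' : elem s1 (pushed s2 k'.+1) by rewrite (equiv_reduced_elem _ h).
have r1 : push_time s2 (pushed s1 k.+1) = k'.
  by apply/eqP; rewrite -H // push_time_eqE //; clear H; lia.
have r2 : push_time s1 (pushed s2 k'.+1) = k.
  by apply/eqP; rewrite H // push_time_eqE //; clear H; lia.
split=> //; have := elem_le_pushed_push_time hy1'; have := elem_le_pushed_push_time hy2'.
by rewrite r1 r2; clear H; lia.
Qed.

(* A vertex records how many elements were pushed and popped so far. *)
Lemma push_class_vertices s1 s2 k k' a a' : equiv_reduced s1 s2 -> k < size s1 -> k' < size s2 ->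
  op_at s1 k = Push a -> op_at s2 k' = Push a' ->
  (forall y, elem s1 y -> (push_time s1 y == k) = (push_time s2 y == k')) ->
  vertex s2 k' = vertex s1 k /\ vertex s2 k'.+1 = vertex s1 k.+1.
Proof.
move=> h h1 h2 E1 E2 H; have w1 := equiv_reduced_wf1 h; have w2 := equiv_reduced_wf2 h.
have [ep ep'] := push_class_pushed h h1 h2 E1 E2 H.
have [hx pux] := push_first_elem w1 h1 E1.
have q1 : push_time s2 (pushed s1 k).+1 = k'.
  by apply/eqP; rewrite -H // pux.
have en : seq_size s2 = seq_size s1 by case: h => _ _ ->.
have eq : popped s1 k = popped s2 k'.
  rewrite !popped_count // en; apply: eq_in_count => w; rewrite mem_iota_elem => hw.
  by rewrite /= -{1}pux -{1}q1 (equiv_reduced_pop_before_push h hw hx).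
have eq' : popped s1 k.+1 = popped s2 k'.+1 by rewrite !poppedS // E1 E2 /= eq.
by rewrite !vertexE ep ep' eq eq'.
Qed.

Lemma pop_class_vertices s1 s2 k k' b b' : equiv_reduced s1 s2 -> k < size s1 -> k' < size s2 ->
  op_at s1 k = Pop b -> op_at s2 k' = Pop b' ->
  (forall y, elem s1 y -> (pop_time s1 y == k) = (pop_time s2 y == k')) ->
  vertex s2 k' = vertex s1 k /\ vertex s2 k'.+1 = vertex s1 k.+1.
Proof.
move=> h h1 h2 E1 E2 H; have w1 := equiv_reduced_wf1 h; have w2 := equiv_reduced_wf2 h.
have en : seq_size s1 = seq_size s2 by case: h.
have [c [hc pc]] := pop_has_elem w1 h1 E1.
have hc2 : elem s2 c by rewrite -(equiv_reduced_elem _ h).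
have pc2 : pop_time s2 c = k' by apply/eqP; rewrite -H // pc.
have pu_lt w : elem s1 w -> (push_time s1 w < k) = (push_time s2 w < k').
  by move=> hw; rewrite -pc -pc2 (equiv_reduced_push_before_pop h hw hc).
have po_lt w : elem s1 w -> (pop_time s1 w < k) = (pop_time s2 w < k').
  move=> hw; rewrite -{1}pc -pc2 !pop_time_lt_out_rel pc pc2 H //.
  by rewrite (equiv_reduced_out_rel h hc hw).
split; apply: vertex_eq => // w hw; have hw2 : elem s2 w by rewrite -(equiv_reduced_elem _ h).
- have n1 : (push_time s1 w == k) = false.
    by rewrite -pc; apply: negbTE; exact: (push_time_neq_pop_time w1 hw hc).
  have n2 : (push_time s2 w == k') = false.
    by rewrite -pc2; apply: negbTE; exact: (push_time_neq_pop_time w2 hw2 hc2).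
  rewrite !ltnS [push_time s1 w <= _]leq_eqVlt [push_time s2 w <= _]leq_eqVlt.
  by rewrite n1 n2 pu_lt.
- rewrite !ltnS [pop_time s1 w <= _]leq_eqVlt [pop_time s2 w <= _]leq_eqVlt.
  by rewrite H // po_lt.
Qed.

Lemma vertex_inj s1 s2 k k' :
  vertex s2 k' = vertex s1 k -> pushed s2 k' = pushed s1 k /\ popped s2 k' = popped s1 k.
Proof. by rewrite !vertexE => [[e1 e2]]; split; lia. Qed.

Lemma pop_time_eq_produced s y k : well_formed s -> elem s y ->
  (pop_time s y == k) =
  (y \in drop (seq_size s - popped s k.+1) (produced s)) &&
  (y \notin drop (seq_size s - popped s k) (produced s)).
Proof.
by move=> wf hy; rewrite -!out_state_atE // !mem_out_state_at // ltnS -leqNgt -eqn_leq.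
Qed.

Lemma edge_push_class s1 s2 k k' a : equiv_reduced s1 s2 -> k < size s1 -> k' < size s2 ->
  op_at s1 k = Push a -> vertex s2 k' = vertex s1 k -> vertex s2 k'.+1 = vertex s1 k.+1 ->
  exists a', op_at s2 k' = Push a' /\
    forall y, elem s1 y -> (push_time s1 y == k) = (push_time s2 y == k').
Proof.
move=> h h1 h2 E V1 V2; have w1 := equiv_reduced_wf1 h.
have [p1 _] := vertex_inj V1; have [p2 _] := vertex_inj V2.
have a1 := wf_op_size_gt0 w1 h1; have s1e := pushedS h1; rewrite E /= in a1 s1e.
have s2e := pushedS h2.
case E2: (op_at s2 k') s2e => [a'|b'] /= s2e; last by lia.
exists a'; split=> // y hy; have hy2 : elem s2 y by rewrite -(equiv_reduced_elem _ h).
by rewrite !push_time_eqE // p1 p2.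
Qed.

Lemma edge_pop_class s1 s2 k k' b : equiv_reduced s1 s2 -> k < size s1 -> k' < size s2 ->
  op_at s1 k = Pop b -> vertex s2 k' = vertex s1 k -> vertex s2 k'.+1 = vertex s1 k.+1 ->
  exists b', op_at s2 k' = Pop b' /\
    forall y, elem s1 y -> (pop_time s1 y == k) = (pop_time s2 y == k').
Proof.
move=> h h1 h2 E V1 V2; have w1 := equiv_reduced_wf1 h; have w2 := equiv_reduced_wf2 h.
have [_ q1] := vertex_inj V1; have [_ q2] := vertex_inj V2.
have a1 := wf_op_size_gt0 w1 h1; have s1e := poppedS h1; rewrite E /= in a1 s1e.
have s2e := poppedS h2.
case E2: (op_at s2 k') s2e => [a'|b'] /= s2e; first by lia.
exists b'; split=> // y hy; have hy2 : elem s2 y by rewrite -(equiv_reduced_elem _ h).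
rewrite !pop_time_eq_produced // q1 q2.
by case: h => _ _ -> ->.
Qed.

Lemma not_consecutiveP (P : nat -> Prop) : ~ consecutive P ->
  exists j k l, [/\ j < k, k < l, P j, P l & ~ P k].
Proof.
move=> nc; apply: NNPP => H; apply: nc => j k l h1 h2 pj pl.
apply: NNPP => npk; apply: H; exists j, k, l; split=> //.
- by rewrite ltn_neqAle h1 andbT; apply/eqP => ejk; apply: npk; rewrite -ejk.
- by rewrite ltn_neqAle h2 andbT; apply/eqP => ekl; apply: npk; rewrite ekl.
Qed.

Lemma correspondsP s i j : well_formed s -> corresponds s i j ->
  exists2 x, elem s x &
    (push_time s x = i /\ pop_time s x = j) \/ (pop_time s x = i /\ push_time s x = j).
Proof.
move=> wf [hi hj ty [x [xi xj]]]; move: ty xi xj; rewrite -/(op_at s i) -/(op_at s j).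
case Ei: (op_at s i) => [a|b]; case Ej: (op_at s j) => [a'|b'] //= _.
  rewrite (mem_support_push _ wf hi Ei) (mem_support_pop _ wf hj Ej).
  by case/andP=> hx /eqP e1 /andP [_ /eqP e2]; exists x => //; left.
rewrite (mem_support_pop _ wf hi Ei) (mem_support_push _ wf hj Ej).
by case/andP=> hx /eqP e1 /andP [_ /eqP e2]; exists x => //; right.
Qed.

Lemma corresponds_push_pop_time s x : well_formed s -> elem s x ->
  corresponds s (push_time s x) (pop_time s x).
Proof.
move=> wf hx; have [a Ea] := op_at_push_time hx; have [b [Eb _]] := op_at_pop_time wf hx.
have hi := push_time_lt hx; have hj := pop_time_lt wf hx.
split=> //; first by rewrite -/(op_at s (push_time s x)) -/(op_at s (pop_time s x)) Ea Eb.
exists x; rewrite (mem_support_push _ wf hi Ea) (mem_support_pop _ wf hj Eb).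
by rewrite hx !eqxx.
Qed.

Lemma corresponds_sym s i j : corresponds s i j -> corresponds s j i.
Proof.
case=> hi hj ty [x [xi xj]]; split=> //; last by exists x.
by move: ty; case: (nth _ s i); case: (nth _ s j).
Qed.

Lemma reduced_pop_pred s b : reduced s -> elem s b -> (push_time s b).+1 < pop_time s b ->
  is_pop (op_at s (pop_time s b).-1).
Proof.
move=> red hb lt; have wf := red.1; have ht := pop_time_lt wf hb.
have hk : (pop_time s b).-1.+1 < size s by rewrite prednK //; lia.
have hpt : is_pop (op_at s (pop_time s b).-1.+1).
  by rewrite prednK; [case: (op_at_pop_time wf hb) => c [-> _] | lia].
apply/negPn/negP => np.
have [_ [E2 [he [pue poe]]]] := reduced_peak red hk np hpt.
rewrite prednK in E2 poe; last by lia.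
have eb := pop1_elem_unique wf hb he ht E2 erefl poe.
by move: pue lt; rewrite -eb; lia.
Qed.

Lemma reduced_push_succ s a : reduced s -> elem s a -> (push_time s a).+1 < pop_time s a ->
  ~~ is_pop (op_at s (push_time s a).+1).
Proof.
move=> red ha lt; have wf := red.1.
have ht : (push_time s a).+1 < size s by apply: (ltn_trans lt); apply: pop_time_lt.
have hnp : ~~ is_pop (op_at s (push_time s a)) by case: (op_at_push_time ha) => d ->.
apply/negP => hp.
have [E1 [_ [_ [_ poe]]]] := reduced_peak red ht hnp hp.
have ea : a = (pushed s (push_time s a)).+1.
  have := pushed_push_time_lt ha; have := elem_le_pushed_push_time ha.
  by rewrite pushedS ?(ltnW ht) // E1 /=; lia.
by move: lt; rewrite {2}ea poe ltnn.
Qed.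

(* The operation just before the first pop after [k] that moves an element of
   the push is itself a pop (by reducedness), and pops an element z trapped
   between two elements of the push. *)
Lemma push_trap s i k x1 x2 : reduced s -> elem s x1 -> elem s x2 ->
  push_time s x1 = i -> push_time s x2 = i -> pop_time s x1 < k < pop_time s x2 ->
  (forall y, elem s y -> push_time s y = i -> pop_time s y != k) ->
  exists b z, [/\ elem s b, elem s z, push_time s b = i,
    pop_time s x1 < pop_time s z < pop_time s b & pop_time s x1 < push_time s z].
Proof.
move=> red hx1 hx2 pux1 pux2 /andP [jk kl] no_k; have wf := red.1.
pose Q t := (k < t) && has (fun y => (push_time s y == i) && (pop_time s y == t))
                           (iota 1 (seq_size s)).
have exQ : exists t, Q t.
  exists (pop_time s x2); rewrite /Q kl /=; apply/hasP; exists x2; first by rewrite mem_iota_elem.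
  by rewrite pux2 !eqxx.
case: (ex_minnP exQ) => t0 /andP [kt0 /hasP [b bin /andP [/eqP pub /eqP pob]]] tmin.
have hb : elem s b by rewrite -mem_iota_elem.
have ix := push_time_lt_pop_time wf hx1.
have hpop : is_pop (op_at s t0.-1) by rewrite -pob; apply: reduced_pop_pred => //; lia.
case Ek: (op_at s t0.-1) hpop => [//|c] _.
have hk : t0.-1 < size s by have := pop_time_lt wf hb; lia.
have [z [hz poz]] := pop_has_elem wf hk Ek.
have nzi : push_time s z != i.
  apply/eqP => pzi; case: (eqVneq t0.-1 k) => ek.
    by have := no_k z hz pzi; rewrite poz ek eqxx.
  have : Q t0.-1.
    rewrite /Q; apply/andP; split; first by lia.
    by apply/hasP; exists z; rewrite ?mem_iota_elem // pzi poz !eqxx.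
  by move/tmin; lia.
have xz : pop_time s x1 < push_time s z.
  case: (ltngtP (pop_time s x1) (push_time s z)) => // c1; last first.
    by move: (push_time_neq_pop_time wf hz hx1); rewrite c1 eqxx.
  case: (ltngtP (push_time s z) i) nzi => // c2 _.
    have p1 : push_time s b < pop_time s z by rewrite pub poz; lia.
    have p2 : work_rel s b z by rewrite /work_rel pub c2.
    by have := pop_time_lifo wf hz hb p1 p2; rewrite poz pob; lia.
  have p2 : work_rel s z x1 by rewrite /work_rel pux1 c2.
  by have := pop_time_lifo wf hx1 hz c1 p2; rewrite poz; lia.
by exists b, z; split=> //; apply/andP; split; lia.
Qed.

Lemma pop_trap s i k x1 x2 : reduced s -> elem s x1 -> elem s x2 ->
  pop_time s x1 = i -> pop_time s x2 = i -> push_time s x1 < k < push_time s x2 ->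
  (forall y, elem s y -> pop_time s y = i -> push_time s y != k) ->
  exists a z, [/\ elem s a, elem s z, pop_time s a = i,
    push_time s a < push_time s z < push_time s x2 & pop_time s z < push_time s x2].
Proof.
move=> red hx1 hx2 pox1 pox2 /andP [jk kl] no_k; have wf := red.1.
pose Q t := (t < k) && has (fun y => (pop_time s y == i) && (push_time s y == t))
                           (iota 1 (seq_size s)).
have exQ : exists t, Q t.
  exists (push_time s x1); rewrite /Q jk /=; apply/hasP; exists x1; first by rewrite mem_iota_elem.
  by rewrite pox1 !eqxx.
have ubQ t : Q t -> t <= k by case/andP => /ltnW.
case: (ex_maxnP exQ ubQ) => t0 /andP [t0k /hasP [a ain /andP [/eqP poa /eqP pua]]] tmax.
have ha : elem s a by rewrite -mem_iota_elem.
have li := push_time_lt_pop_time wf hx2.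
have hpush : ~~ is_pop (op_at s t0.+1) by rewrite -pua; apply: reduced_push_succ => //; lia.
case Ek: (op_at s t0.+1) hpush => [d|//] _.
have t1s : t0.+1 < size s by have := push_time_lt hx2; lia.
have [hz puz] := push_first_elem wf t1s Ek.
set z := (pushed s t0.+1).+1 in hz puz.
have nzi : pop_time s z != i.
  apply/eqP => pzi; case: (eqVneq t0.+1 k) => ek.
    by have := no_k z hz pzi; rewrite puz ek eqxx.
  have : Q t0.+1.
    rewrite /Q; apply/andP; split; first by lia.
    by apply/hasP; exists z; rewrite ?mem_iota_elem // pzi puz !eqxx.
  by move/tmax; lia.
have zi : pop_time s z < i.
  have p1 : push_time s z < pop_time s a by rewrite puz poa; lia.
  have p2 : work_rel s z a by rewrite /work_rel puz pua ltnSn.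
  by have := pop_time_lifo wf ha hz p1 p2; rewrite poa ltn_neqAle nzi => ->.
have zb : pop_time s z < push_time s x2.
  case: (ltngtP (pop_time s z) (push_time s x2)) => // c1.
    have p2 : work_rel s x2 z by rewrite /work_rel puz; apply/orP; left; lia.
    by have := pop_time_lifo wf hz hx2 c1 p2; rewrite pox2; lia.
  by move: (push_time_neq_pop_time wf hx2 hz); rewrite c1 eqxx.
by exists a, z; split=> //; rewrite pua puz; apply/andP; split; lia.
Qed.

Lemma equiv_reduced_equivalent a b : equiv_reduced a b -> reduced b /\ equivalent a b.
Proof. by case=> ra rb e1 e2; split=> //; split=> //; [exact: ra.1 | exact: rb.1]. Qed.

Lemma fixed_push_of_stable s x : reduced s -> elem s x ->
  (forall beta, equiv_reduced s beta -> forall y, elem s y ->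
     (push_time s y == push_time s x) = (push_time beta y == push_time beta x)) ->
  fixed s (push_time s x).
Proof.
move=> red hx H beta rb eqv; have h := equivalent_reduced red rb eqv.
have hxb : elem beta x by rewrite -(equiv_reduced_elem _ h).
have [a E] := op_at_push_time hx; have [a' E'] := op_at_push_time hxb.
exists (push_time beta x); split; first exact: push_time_lt.
exact: (push_class_vertices h (push_time_lt hx) (push_time_lt hxb) E E' (H _ h)).
Qed.

Lemma fixed_pop_of_stable s x : reduced s -> elem s x ->
  (forall beta, equiv_reduced s beta -> forall y, elem s y ->
     (pop_time s y == pop_time s x) = (pop_time beta y == pop_time beta x)) ->
  fixed s (pop_time s x).
Proof.
move=> red hx H beta rb eqv; have h := equivalent_reduced red rb eqv.
have w1 := equiv_reduced_wf1 h; have w2 := equiv_reduced_wf2 h.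
have hxb : elem beta x by rewrite -(equiv_reduced_elem _ h).
have [b [E _]] := op_at_pop_time w1 hx; have [b' [E' _]] := op_at_pop_time w2 hxb.
exists (pop_time beta x); split; first exact: pop_time_lt.
exact: (pop_class_vertices h (pop_time_lt w1 hx) (pop_time_lt w2 hxb) E E' (H _ h)).
Qed.

Lemma fixed_push_not_consecutive s i : reduced s -> is_push (op_at s i) ->
  ~ consecutive (fun j => corresponds s i j) -> fixed s i.
Proof.
move=> red Ei nc; have wf := red.1.
have [j [k [l [jk kl Pj Pl nPk]]]] := not_consecutiveP nc.
have popped_at t : corresponds s i t -> exists2 x, elem s x & push_time s x = i /\ pop_time s x = t.
  case/(correspondsP wf) => x hx [[e1 e2]|[e1 _]]; first by exists x.
  by have [b [Eb _]] := op_at_pop_time wf hx; move: Ei; rewrite -e1 Eb.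
have [x1 hx1 [pux1 pox1]] := popped_at _ Pj.
have [x2 hx2 [pux2 pox2]] := popped_at _ Pl.
have no_k y : elem s y -> push_time s y = i -> pop_time s y != k.
  move=> hy pyi; apply/eqP => pyk; apply: nPk.
  by rewrite -pyk -pyi; apply: corresponds_push_pop_time.
have xk : pop_time s x1 < k < pop_time s x2 by rewrite pox1 pox2 jk kl.
have [b [z [hb hz pub xzb xz]]] := push_trap red hx1 hx2 pux1 pux2 xk no_k.
rewrite -pux1; apply: fixed_push_of_stable => // beta h y hy.
exact: (push_class_stable h hx1 hb hz hy (etrans pux1 (esym pub)) xzb xz).
Qed.

Lemma fixed_pop_not_consecutive s i : reduced s -> is_pop (op_at s i) ->
  ~ consecutive (fun j => corresponds s i j) -> fixed s i.
Proof.
move=> red Ei nc; have wf := red.1.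
have [j [k [l [jk kl Pj Pl nPk]]]] := not_consecutiveP nc.
have pushed_at t : corresponds s i t -> exists2 x, elem s x & pop_time s x = i /\ push_time s x = t.
  case/(correspondsP wf) => x hx [[e1 _]|[e1 e2]]; last by exists x.
  by have [a Ea] := op_at_push_time hx; move: Ei; rewrite -e1 Ea.
have [x1 hx1 [pox1 pux1]] := pushed_at _ Pj.
have [x2 hx2 [pox2 pux2]] := pushed_at _ Pl.
have no_k y : elem s y -> pop_time s y = i -> push_time s y != k.
  move=> hy pyi; apply/eqP => pyk; apply: nPk.
  by rewrite -pyk -pyi; apply/corresponds_sym/corresponds_push_pop_time.
have xk : push_time s x1 < k < push_time s x2 by rewrite pux1 pux2 jk kl.
have [a [z [ha hz poa azb zb]]] := pop_trap red hx1 hx2 pox1 pox2 xk no_k.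
rewrite -poa; apply: fixed_pop_of_stable => // beta h y hy.
exact: (pop_class_stable h ha hx2 hz hy (etrans poa (esym pox2)) azb zb).
Qed.

Lemma fixed_corresponds s i j : reduced s -> corresponds s i j -> fixed s j -> fixed s i.
Proof.
move=> red cij fj; have wf := red.1; case: (cij) => _ hj _ _.
have [x hx [[pux pox]|[pox pux]]] := correspondsP wf cij.
- rewrite -pux; apply: fixed_push_of_stable => // beta h y hy.
  have [rb eqv] := equiv_reduced_equivalent h.
  have [k' [hk' [V1 V2]]] := fj beta rb eqv.
  have [b [Eb _]] := op_at_pop_time wf hx.
  have [_ [_ H]] := edge_pop_class h hj hk' (etrans (congr1 (op_at s) (esym pox)) Eb) V1 V2.
  have pob : pop_time beta x = k' by apply/eqP; rewrite -H // pox.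
  move: (push_flip_pop_flip h hy hx).
  by rewrite pox pob H // eqxx => /negbFE/eqP.
- rewrite -pox; apply: fixed_pop_of_stable => // beta h y hy.
  have [rb eqv] := equiv_reduced_equivalent h.
  have [k' [hk' [V1 V2]]] := fj beta rb eqv.
  have [a Ea] := op_at_push_time hx.
  have [_ [_ H]] := edge_push_class h hj hk' (etrans (congr1 (op_at s) (esym pux)) Ea) V1 V2.
  have pub : push_time beta x = k' by apply/eqP; rewrite -H // pux.
  move: (push_flip_pop_flip h hy hx).
  by rewrite pux pub H // eqxx => /esym/negbFE/eqP.
Qed.

Theorem mainTheorem12 (alpha : seq op) :
  reduced alpha ->
  (forall i, i < size alpha ->
     ~ consecutive (fun j => corresponds alpha i j) -> fixed alpha i) /\
  (forall i j, corresponds alpha i j -> fixed alpha j -> fixed alpha i).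
Proof.
move=> red; split=> [i _ nc | i j]; last exact: fixed_corresponds.
case E: (op_at alpha i) => [a|b].
- by apply: fixed_push_not_consecutive => //; rewrite E.
- by apply: fixed_pop_not_consecutive => //; rewrite E.
Qed.
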